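(* Let $T\subset V$ be an open cone with basepoint $b\in T$, let $p\in\partial T\setminus[0]_T$, let $z\in T$, and put $y_\lambda:=(1-\lambda)p+\lambda z$ for $\lambda\in(0,1)$. Then $\lim_{\lambda\to0}r_{T,p}(y_\lambda)=-RF_T(b,p)$.
   Context: $V$ is a finite-dimensional real vector space. An open cone is a nonempty open convex set $T\subset V$ with $\lambda T\subseteq T$ for all $\lambda>0$ and $0\notin T$; $\partial T$ its boundary. Write $x\le_T y$ iff $y-x\in\overline T$, $[0]_T:=\overline T\cap(-\overline T)$. $M_T(y/x):=\inf\{\lambda>0:y\le_T\lambda x\}$ for $y\in V$, $x\in T$; the reverse Funk function is $RF_T(x,y):=\log M_T(y/x)$ for $x\in T$, $y\in V$. For $p\in\partial T\setminus[0]_T$, $r_{T,p}(x):=RF_T(x,p)-RF_T(b,p)$, $x\in T$. *)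

From HB Require Import structures.
From mathcomp Require Import all_boot all_order all_algebra.
From mathcomp Require Import all_classical all_reals all_analysis.
Set Implicit Arguments. Unset Strict Implicit. Unset Printing Implicit Defensive.
Import Order.TTheory GRing.Theory Num.Theory.
Import numFieldNormedType.Exports.
Local Open Scope classical_set_scope.
Local Open Scope ring_scope.

Section Cones.
Context {R : realType} {n : nat}.
Local Notation V := 'rV[R]_n.

Definition open_cone (T : set V) : Prop :=
  [/\ T !=set0, open T,
      (forall x y (t : R), T x -> T y -> 0 <= t -> t <= 1 -> T (t *: x + (1 - t) *: y)),
      (forall (l : R) x, 0 < l -> T x -> T (l *: x)) & ~ T 0].

Definition cone_boundary (T : set V) : set V := closure T `\` interior T.

Definition cone_le (T : set V) (x y : V) : Prop := closure T (y - x).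

Definition cone_zero (T : set V) : set V :=
  [set v | closure T v /\ closure T (- v)].

Definition M_T (T : set V) (y x : V) : R :=
  inf [set l : R | 0 < l /\ cone_le T y (l *: x)].

Definition RF (T : set V) (x y : V) : R := ln (M_T T y x).

Definition r_Tp (T : set V) (b p : V) (x : V) : R := RF T x p - RF T b p.

End Cones.

From HB Require Import structures.
From mathcomp Require Import all_boot all_order all_algebra.
From mathcomp Require Import all_classical all_reals all_analysis.
From mathcomp Require Import ring lra.
Set Implicit Arguments. Unset Strict Implicit. Unset Printing Implicit Defensive.
Import Order.TTheory GRing.Theory Num.Theory.
Import numFieldNormedType.Exports.
Local Open Scope classical_set_scope.
Local Open Scope ring_scope.

(* Put y_l := (1 - l) p + l z.  Since y_l / (1 - l) - p = l/(1 - l) z lies in T,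
   M_T(p / y_l) <= 1/(1 - l).  Conversely, as l -> 0 the vector
   (1 - e) y_l - p tends to -e p, which is not in the closed set cl T because
   p is not in [0]_T; and if m y_l - p were in cl T for some m < 1 - e, adding
   (1 - e - m) y_l in cl T would put (1 - e) y_l - p in cl T as well.  Hence
   M_T(p / y_l) -> 1, so RF_T(y_l, p) -> 0 and r_{T,p}(y_l) -> -RF_T(b, p). *)

Lemma continuous_closure_image (U W : topologicalType) (f : U -> W)
    (A : set U) (B : set W) :
  continuous f -> (forall a, A a -> closure B (f a)) ->
  forall x, closure A x -> closure B (f x).
Proof.
move=> fc fAB x Ax; apply: (closed_closure (A := B)) => N /(fc x) Nf.
have [a [Aa Na]] := Ax _ Nf.
by exists (f a); split => //; apply: fAB.
Qed.

Section OpenCone.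
Context {R : realType} {n : nat}.
Local Notation V := 'rV[R]_n.
Variable T : set V.
Hypothesis hT : open_cone T.

Lemma open_cone_scale l x : 0 < l -> T x -> T (l *: x).
Proof. by case: hT => _ _ _ sc _; apply: sc. Qed.

Lemma open_cone_add x y : T x -> T y -> T (x + y).
Proof.
case: hT => _ _ cv _ _ Tx Ty.
have half_ge0 : 0 <= (2 : R)^-1 by rewrite invr_ge0.
have half_le1 : (2 : R)^-1 <= 1 by rewrite invf_le1 // ler1n.
have two_gt0 : (0 : R) < 2 by [].
have := open_cone_scale two_gt0 (cv x y _ Tx Ty half_ge0 half_le1).
have -> : 1 - (2 : R)^-1 = 2^-1 by field.
by rewrite scalerDr !scalerA mulfV ?pnatr_eq0 // !scale1r.
Qed.

Lemma closure_cone_scale l x : 0 < l -> closure T x -> closure T (l *: x).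
Proof.
move=> l0; apply: continuous_closure_image => [y|a Ta].
  exact: (cvgZ (cvg_cst l) cvg_id).
exact/subset_closure/open_cone_scale.
Qed.

Lemma closure_cone_add x y : closure T x -> closure T y -> closure T (x + y).
Proof.
have addr_cont (c : V) : continuous (fun v : V => v + c).
  by move=> v; apply: (cvgD cvg_id (cvg_cst c)).
move=> Tx Ty; rewrite addrC.
apply: (continuous_closure_image (addr_cont x)) Ty => a Ta; rewrite addrC.
apply: (continuous_closure_image (addr_cont a)) Tx => c Tc.
exact/subset_closure/open_cone_add.
Qed.

Lemma M_T_le y x m : 0 < m -> cone_le T y (m *: x) -> M_T T y x <= m.
Proof.
move=> m0 ym; apply: ge_inf => //.
by exists 0 => k [k0 _]; exact: ltW.
Qed.

Lemma M_T_ge y x m k : closure T x -> 0 < m -> cone_le T y (m *: x) ->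
  ~ cone_le T y (k *: x) -> k <= M_T T y x.
Proof.
move=> Tx m0 ym nyk.
apply: lb_le_inf => [|m' [m'0 ym']]; first by exists m; split.
rewrite leNgt; apply/negP => m'k; apply: nyk.
have km'_gt0 : 0 < k - m' by rewrite subr_gt0.
have := closure_cone_add ym' (closure_cone_scale km'_gt0 Tx).
by rewrite addrAC -scalerDl addrCA subrr addr0.
Qed.

End OpenCone.

Section Segment.
Context {R : realType} {n : nat}.
Local Notation V := 'rV[R]_n.
Variables (T : set V) (p z : V).
Hypotheses (hT : open_cone T) (Tp : closure T p) (p_nz : ~ cone_zero T p)
  (Tz : T z).
Local Notation y l := ((1 - l) *: p + l *: z).

Lemma closure_segment l : 0 < l < 1 -> closure T (y l).
Proof.
case/andP=> l0 l1; apply: (closure_cone_add hT).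
  by apply: (closure_cone_scale hT) => //; rewrite subr_gt0.
exact/subset_closure/(open_cone_scale hT).
Qed.

Lemma cone_le_segment l : 0 < l < 1 -> cone_le T p ((1 - l)^-1 *: y l).
Proof.
case/andP=> l0 l1; have l1' : 1 - l != 0 by rewrite subr_eq0 gt_eqF.
rewrite /cone_le scalerDr !scalerA mulVf // scale1r addrAC subrr add0r.
apply/subset_closure/(open_cone_scale hT) => //.
by rewrite mulr_gt0 // invr_gt0 subr_gt0.
Qed.

Lemma M_T_segment_bounds l e : 0 < l < 1 -> ~ cone_le T p ((1 - e) *: y l) ->
  1 - e <= M_T T p (y l) <= (1 - l)^-1.
Proof.
move=> l01 not_le; have /andP[_ l1] := l01.
have inv_gt0 : 0 < (1 - l)^-1 by rewrite invr_gt0 subr_gt0.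
rewrite (M_T_le inv_gt0 (cone_le_segment l01)) andbT.
exact: (M_T_ge hT (closure_segment l01) inv_gt0 (cone_le_segment l01)).
Qed.

Lemma near0_not_cone_le_segment e : 0 < e ->
  \forall l \near 0^'+, ~ cone_le T p ((1 - e) *: y l).
Proof.
move=> e0.
have not_le0 : ~ closure T ((1 - e) *: y 0 - p).
  rewrite subr0 scale1r scale0r addr0 scalerBl scale1r addrAC subrr add0r => h.
  apply: p_nz; split; first exact: Tp.
  have einv_gt0 : 0 < e^-1 by rewrite invr_gt0.
  have -> : - p = e^-1 *: - (e *: p).
    by rewrite scalerN scalerA mulVf ?gt_eqF // scale1r.
  exact: (closure_cone_scale hT einv_gt0 h).
have cont : (fun l => (1 - e) *: y l - p) @ 0 --> (1 - e) *: y 0 - p.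
  apply: cvgB; last exact: cvg_cst.
  apply: cvgZ; first exact: cvg_cst.
  apply: cvgD; apply: cvgZ => //; try exact: cvg_cst.
  apply: cvgB; [exact: cvg_cst | exact: cvg_id].
have open_ncl : open (~` closure T) by apply: closed_openC; exact: closed_closure.
apply: cvg_within.
exact: cont _ (open_nbhs_nbhs (conj open_ncl not_le0)).
Qed.

Lemma M_T_segment_cvg : (fun l => M_T T p (y l)) @ 0^'+ --> (1 : R).
Proof.
apply/cvgrPdist_le => e e0; near=> l.
have l0 : 0 < l by near: l; exact: nbhs_right_gt.
have l_small : l < e / (1 + e).
  by near: l; apply: nbhs_right_lt; apply: divr_gt0; lra.
have l1 : l < 1.
  by apply: (lt_trans l_small); rewrite ltr_pdivrMr; lra.
have /andP[lo up] : 1 - e <= M_T T p (y l) <= (1 - l)^-1.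
  apply: M_T_segment_bounds; first by rewrite l0 l1.
  by near: l; exact: near0_not_cone_le_segment.
have up' : (1 - l)^-1 <= 1 + e.
  rewrite ltr_pdivlMr in l_small; last lra.
  rewrite -div1r ler_pdivrMr; [nra | lra].
rewrite ler_norml; apply/andP; split; lra.
Unshelve. all: by end_near.
Qed.

End Segment.

Theorem mainTheorem19 (R : realType) (n : nat) (T : set 'rV[R]_n) (b p z : 'rV[R]_n) :
  open_cone T -> T b ->
  cone_boundary T p -> ~ cone_zero T p ->
  T z ->
  (fun l : R => r_Tp T b p ((1 - l) *: p + l *: z)) @ 0^'+ --> - RF T b p.
Proof.
move=> hT _ [Tp _] p_nz Tz.
have -> : - RF T b p = ln 1 - RF T b p by rewrite ln1 sub0r.
apply: cvgB; last exact: cvg_cst.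
exact: continuous_cvg (continuous_ln ltr01) (M_T_segment_cvg hT Tp p_nz Tz).
Qed.
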